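(* Let $D \subset \mathbb{Z}^m \setminus \{\mathbf{0}\}$ be finite with $D = -D$, and let $F_D$ be the set of Laurent polynomials $f(z) = \sum_{d \in D} c_d z_1^{d_1}\cdots z_m^{d_m}$ with $c_{-d} = \overline{c_d}$ for all $d \in D$ and $\sum_{d \in D} |c_d|^2 = 1$, topologized via the coefficient vector $(c_d)_{d \in D}$. Then the function $f \mapsto \rho_-(f)$ is continuous on $F_D$.
   Context: $\lambda_m$ is the normalized Lebesgue measure on $\mathbb{T}^m$ ($\mathbb{T}$ the unit circle), with $\lambda_m(\mathbb{T}^m)=1$; such $f$ are real-valued on $\mathbb{T}^m$, and $\rho_-(f) = \lambda_m(\{z \in \mathbb{T}^m : f(z) < 0\})$. *)

From HB Require Import structures.
From mathcomp Require Import all_boot all_order all_algebra.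
From mathcomp Require Import finmap.
From mathcomp Require Import complex.
From mathcomp Require Import all_classical all_reals all_analysis.
Set Implicit Arguments. Unset Strict Implicit. Unset Printing Implicit Defensive.
Import Order.TTheory GRing.Theory Num.Theory.
Local Open Scope ring_scope.
Local Open Scope classical_set_scope.

Section Defs.
Variable R : realType.

(* Points of T^m are parametrized by angles theta in [0,1]^m via
   z_k = exp(2 pi i theta_k); only the coordinates 0..m-1 of
   theta : nat -> R are used. *)
Definition expi (x : R) : R[i] := (cos x +i* sin x)%C.

Definition torus_pt (m : nat) (theta : nat -> R) (k : 'I_m) : R[i] :=
  expi (2 * pi * theta k).

Fixpoint iter_int (n : nat) (g : (nat -> R) -> \bar R) : \bar R :=
  match n with
  | 0 => g (fun _ => 0)
  | n'.+1 =>
      (\int[lebesgue_measure]_(t in `[0%R, 1%R])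
         iter_int n' (fun x => g (fun k => if k == n' then t else x k)))%E
  end.

Definition torus_measure (m : nat) (A : set (nat -> R)) : \bar R :=
  iter_int m (fun theta => (\1_A theta)%:E).

Definition laurent_eval (m : nat) (D : {fset 'rV[int]_m})
    (c : 'rV[int]_m -> R[i]) (z : 'I_m -> R[i]) : R[i] :=
  \sum_(d <- D) c d * \prod_(k < m) (z k) ^ (d ord0 k).

Definition rho_neg (m : nat) (D : {fset 'rV[int]_m}) (c : 'rV[int]_m -> R[i])
  : \bar R :=
  torus_measure m [set theta | laurent_eval D c (torus_pt theta) < 0].

Definition in_FD (m : nat) (D : {fset 'rV[int]_m}) (c : 'rV[int]_m -> R[i])
  : Prop :=
  (forall d, d \in D -> c (- d) = (c d)^*) /\
  \sum_(d <- D) `|c d| ^+ 2 = 1.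

End Defs.

(* For c in F_D the polynomial f_c is real on the torus, and |f_c' - f_c| is
   uniformly bounded by |D| max_d |c'_d - c_d|.  Hence the sets {f_c' < 0} and
   {f_c < 0} differ only inside a band {|f_c| <= eta}, whose measure tends to the
   measure of {f_c = 0} as eta -> 0.  That zero set is null: f_c is a nonzero
   trigonometric polynomial, and by Fubini and induction on m this reduces to one
   variable, where z^M f_c(z) is a nonzero polynomial with finitely many roots. *)

From HB Require Import structures.
From mathcomp Require Import all_boot all_order all_algebra.
From mathcomp Require Import finmap.
From mathcomp Require Import complex.
From mathcomp Require Import all_classical all_reals all_analysis.
From mathcomp Require Import measurable_realfun.
From mathcomp Require Import ring lra zify.
Import Order.TTheory GRing.Theory Num.Theory.
Set Implicit Arguments. Unset Strict Implicit. Unset Printing Implicit Defensive.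
Local Open Scope ring_scope.
Local Open Scope classical_set_scope.

Section ComplexExponential.
Variable R : realType.
Local Open Scope complex_scope.

Lemma expiD (a b : R) : expi (a + b) = expi a * expi b.
Proof.
rewrite /expi cosD sinD /=; simpc.
by congr (_ +i* _); rewrite addrC [sin a * _]mulrC [cos a * _]mulrC.
Qed.

Lemma expi0 : expi (0 : R) = 1.
Proof. by rewrite /expi cos0 sin0. Qed.

Lemma norm_expi (a : R) : `|expi a| = 1.
Proof. by rewrite /expi; simpc; rewrite cos2Dsin2 sqrtr1. Qed.

Lemma expi_neq0 (a : R) : expi a != 0.
Proof. by rewrite -normr_eq0 norm_expi oner_eq0. Qed.

Lemma conj_expi (a : R) : (expi a)^* = expi (- a).
Proof. by rewrite /expi /= cosN sinN. Qed.

Lemma expiN (a : R) : expi (- a) = (expi a)^-1.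
Proof.
by rewrite -[LHS]mulr1 -(mulfV (expi_neq0 a)) mulrA -expiD addNr expi0 mul1r.
Qed.

Lemma expiXn (a : R) (n : nat) : expi a ^+ n = expi (n%:R * a).
Proof.
elim: n => [|n IH]; first by rewrite expr0 mul0r expi0.
by rewrite exprS IH -expiD mulrSr mulrDl mul1r addrC.
Qed.

Lemma expiXz (a : R) (k : int) : expi a ^ k = expi (k%:~R * a).
Proof.
case: k => n; first by rewrite -exprnP expiXn.
by rewrite NegzE -exprnN expiXn -expiN mulrNz mulNr.
Qed.

Lemma expi_2pi_inj (t1 t2 : R) : 0 <= t1 < 1 -> 0 <= t2 < 1 ->
  expi (2 * pi * t1) = expi (2 * pi * t2) -> t1 = t2.
Proof.
wlog le12 : t1 t2 / t1 <= t2.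
  move=> H h1 h2 e; have [le|/ltW le] := lerP t1 t2; first exact: H.
  exact/esym/(H t2 t1).
move=> /andP[t1_ge0 _] /andP[_ t2_lt1] e12.
set u := t2 - t1.
have cos_2piu : cos (2 * pi * u) = 1.
  have e1 : expi (2 * pi * u) = 1 by rewrite /u mulrBr expiD expiN e12 mulfV ?expi_neq0.
  by have := congr1 (@complex.Re R) e1.
have sin_piu : sin (pi * u) = 0.
  have pyth := cos2Dsin2 (pi * u).
  rewrite (_ : 2 * pi * u = pi * u + pi * u) ?cosD in cos_2piu; last by ring.
  have : sin (pi * u) ^+ 2 = 0 by rewrite !expr2; lra.
  by move/eqP; rewrite sqrf_eq0 => /eqP.
apply/le_anti; rewrite le12 -subr_le0 -/u leNgt; apply/negP => u_gt0.
have : 0 < pi * u < pi.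
  have pi_gt0 := @pi_gt0 R; rewrite mulr_gt0 //=.
  have : u < 1 by rewrite /u; lra.
  nra.
by move/sin_gt0_pi; rewrite sin_piu ltxx.
Qed.

End ComplexExponential.

Section ComplexMeasurable.
Context {R : realType} d (T : measurableType d).
Implicit Types f g : T -> R[i].

(* [R[i]] carries no sigma-algebra, so a complex function is measurable when its
   real and imaginary parts are. *)
Definition cmeasurable f :=
  measurable_fun setT (fun x => complex.Re (f x)) /\
  measurable_fun setT (fun x => complex.Im (f x)).

Lemma cmeasurable_cst (c : R[i]) : cmeasurable (fun=> c).
Proof. by split; exact: measurable_cst. Qed.

Lemma cmeasurableD f g : cmeasurable f -> cmeasurable g ->
  cmeasurable (fun x => f x + g x).
Proof.
move=> [f1 f2] [g1 g2]; split.
- rewrite (_ : (fun x => _) = (fun x => complex.Re (f x)) \+ (fun x => complex.Re (g x))).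
    exact: measurable_funD.
  by apply: funext => x /=; case: (f x) => ? ?; case: (g x).
- rewrite (_ : (fun x => _) = (fun x => complex.Im (f x)) \+ (fun x => complex.Im (g x))).
    exact: measurable_funD.
  by apply: funext => x /=; case: (f x) => ? ?; case: (g x).
Qed.

Lemma cmeasurableM f g : cmeasurable f -> cmeasurable g ->
  cmeasurable (fun x => f x * g x).
Proof.
move=> [f1 f2] [g1 g2]; split.
- rewrite (_ : (fun x => _) =
      ((fun x => complex.Re (f x)) \* (fun x => complex.Re (g x)))
      \- ((fun x => complex.Im (f x)) \* (fun x => complex.Im (g x)))).
    by apply: measurable_funB; exact: measurable_funM.
  by apply: funext => x /=; case: (f x) => ? ?; case: (g x).
- rewrite (_ : (fun x => _) =
      ((fun x => complex.Re (f x)) \* (fun x => complex.Im (g x)))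
      \+ ((fun x => complex.Im (f x)) \* (fun x => complex.Re (g x)))).
    by apply: measurable_funD; exact: measurable_funM.
  by apply: funext => x /=; case: (f x) => ? ?; case: (g x).
Qed.

Lemma cmeasurable_sum I (r : seq I) (P : pred I) (F : I -> T -> R[i]) :
  (forall i, cmeasurable (F i)) -> cmeasurable (fun x => \sum_(i <- r | P i) F i x).
Proof.
move=> mF; elim: r => [|i r IH].
  by under eq_fun do rewrite big_nil; exact: cmeasurable_cst.
by under eq_fun do rewrite big_cons; case: (P i) => //; exact: cmeasurableD.
Qed.

Lemma cmeasurable_prod I (r : seq I) (P : pred I) (F : I -> T -> R[i]) :
  (forall i, cmeasurable (F i)) -> cmeasurable (fun x => \prod_(i <- r | P i) F i x).
Proof.
move=> mF; elim: r => [|i r IH].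
  by under eq_fun do rewrite big_nil; exact: cmeasurable_cst.
by under eq_fun do rewrite big_cons; case: (P i) => //; exact: cmeasurableM.
Qed.

Lemma cmeasurable_expiz (phi : T -> R) (k : int) : measurable_fun setT phi ->
  cmeasurable (fun x => expi (phi x) ^ k).
Proof.
move=> mphi; under eq_fun do rewrite expiXz.
have mkphi : measurable_fun setT (fun x => k%:~R * phi x).
  by apply: measurable_funM => //; exact: measurable_cst.
split => /=.
- exact: measurableT_comp (continuous_measurable_fun (@continuous_cos R)) mkphi.
- exact: measurableT_comp (continuous_measurable_fun (@continuous_sin R)) mkphi.
Qed.

Lemma measurable_cfun_eq0 f : cmeasurable f -> measurable [set x | f x = 0].
Proof.
move=> [f1 f2].
rewrite (_ : [set x | f x = 0] = ((fun x => complex.Re (f x)) @^-1` [set 0]) `&`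
   ((fun x => complex.Im (f x)) @^-1` [set 0])).
  by apply: measurableI; rewrite -[X in measurable X]setTI;
    [apply: f1 | apply: f2] => //; exact: measurable_set1.
apply/seteqP; split => x /=; first by move=> ->.
by case: (f x) => a b /= [-> ->].
Qed.

Lemma measurable_cfun_lt0 f : cmeasurable f -> measurable [set x | f x < 0].
Proof.
move=> [f1 f2].
rewrite (_ : [set x | f x < 0] = ((fun x => complex.Im (f x)) @^-1` [set 0]) `&`
   ((fun x => complex.Re (f x)) @^-1` `]-oo, 0[)).
  apply: measurableI; rewrite -[X in measurable X]setTI.
  - by apply: f2 => //; exact: measurable_set1.
  - by apply: f1 => //; exact: measurable_itv.
apply/seteqP; split => x /=; rewrite ltcE /= in_itv /=.
  by case/andP => /eqP.
by move=> [-> ->]; rewrite eqxx.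
Qed.

End ComplexMeasurable.

Section UnitCube.
Variable R : realType.

Definition unit_line : measurableType _ := g_sigma_algebraType (R.-ocitv.-measurable).
Definition uniform01 : probability unit_line R := uniform_prob (@ltr01 R).

(* [cube n.+1] is [cube n * unit_line], with coordinate [n] on the last factor;
   the base factor [cube 0] is a dummy copy of [unit_line] that [angles]
   ignores, so that every [cube_prob n] is a probability. *)
Fixpoint cube_space (n : nat) : {d : measure_display & measurableType d} :=
  match n with
  | 0 => existT _ _ unit_line
  | n'.+1 => existT _ _ ((projT2 (cube_space n') * unit_line)%type : measurableType _)
  end.

Definition cube n := projT2 (cube_space n).

Fixpoint cube_prob (n : nat) : probability (cube n) R :=
  match n as n0 return probability (cube n0) R with
  | 0 => uniform01
  | n'.+1 => ((cube_prob n' \x uniform01)%E : probability _ R)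
  end.

Fixpoint angles (n : nat) : cube n -> nat -> R :=
  match n as n0 return cube n0 -> nat -> R with
  | 0 => fun _ _ => 0
  | n'.+1 => fun (yt : (cube n' * unit_line)%type) k =>
      if k == n' then yt.2 else @angles n' yt.1 k
  end.
Arguments angles : clear implicits.

Lemma anglesS n (y : cube n) (t : unit_line) k :
  angles n.+1 ((y, t) : cube n.+1) k = if k == n then t else angles n y k.
Proof. by []. Qed.

Lemma measurable_angle n i : measurable_fun setT (fun x : cube n => angles n x i).
Proof.
elim: n => [|n IH] /=; first exact: measurable_cst.
case: (i == n); first exact: measurable_snd.
exact: measurableT_comp IH measurable_fst.
Qed.

Lemma iter_int_cube n (g : (nat -> R) -> \bar R) :
  measurable_fun setT (g \o angles n) -> (forall x, 0 <= g x)%E ->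
  iter_int n g = (\int[cube_prob n]_x g (angles n x))%E.
Proof.
elim: n g => [|n IH] g mg g_ge0 /=.
  by rewrite integral_cst //= probability_setT mule1.
rewrite (fubini_tonelli2 (fun yt => g (angles n.+1 yt))) //.
rewrite integral_uniform; first last.
- by move=> y; apply: integral_ge0 => x _.
- exact: (measurable_fun_fubini_tonelli_G (fun yt => g (angles n.+1 yt))).
rewrite subr0 invr1 mul1e; apply: eq_integral => t _.
by rewrite IH //; exact: measurable_fun_pair1 t mg.
Qed.

Lemma torus_measure_cube n (A : set (nat -> R)) :
  measurable (angles n @^-1` A) -> torus_measure n A = cube_prob n (angles n @^-1` A).
Proof.
move=> mA; rewrite /torus_measure iter_int_cube //.
- by rewrite -[X in cube_prob n X]setIT -integral_indic.
- exact/measurable_EFinP/measurable_indic.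
Qed.

End UnitCube.
Arguments angles {R} n.
Arguments cube_prob {R} n.
Arguments cube {R} n.

Lemma laurent_roots (F : closedFieldType) (I : eqType) (s : seq I) (b : I -> F)
    (e : I -> int) (e0 : int) :
  \sum_(j <- s | e j == e0) b j != 0 ->
  exists r : seq F, forall z, z != 0 -> \sum_(j <- s) b j * z ^ e j = 0 -> z \in r.
Proof.
move=> b_e0_neq0.
(* multiplying by z ^ M turns the Laurent polynomial into a polynomial *)
pose M : nat := (`|e0| + \sum_(j <- s) `|e j|)%N.
have eM j : j \in s -> 0 <= e j + M%:Z.
  move=> js; have : (`|e j| <= M)%N by rewrite /M (big_rem j) //= addnCA leq_addr.
  lia.
have e0M : 0 <= e0 + M%:Z.
  have : (`|e0| <= M)%N by rewrite /M leq_addr.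
  lia.
pose Q : {poly F} := \sum_(j <- s) b j *: 'X^(absz (e j + M%:Z)).
have Q_neq0 : Q != 0.
  apply: contraNneq b_e0_neq0 => /(congr1 (fun p : {poly F} => p`_(absz (e0 + M%:Z)))).
  rewrite coef0 /Q coef_sum => coef_Q; apply/eqP; rewrite -[RHS]coef_Q.
  rewrite big_mkcond [RHS]big_seq [LHS]big_seq; apply: eq_bigr => j js.
  rewrite coefZ coefXn.
  have -> : (absz (e0 + M%:Z) == absz (e j + M%:Z)) = (e j == e0).
    apply/eqP/eqP => [|->] // /(congr1 Posz).
    by rewrite !gez0_abs ?eM // => /addIr.
  by case: eqP; rewrite ?mulr1 ?mulr0.
have [r Q_factor] := closed_field_poly_normal Q.
exists r => z z_neq0 z_root; rewrite -root_prod_XsubC.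
suff : root Q z by rewrite Q_factor rootZ ?lead_coef_eq0.
rewrite /root /Q horner_sum.
have -> : \sum_(j <- s) (b j *: 'X^(absz (e j + M%:Z))).[z] =
    (\sum_(j <- s) b j * z ^ e j) * z ^ (M%:Z).
  rewrite big_distrl /= big_seq [RHS]big_seq; apply: eq_bigr => j js.
  rewrite hornerZ hornerXn -mulrA -expfzDr // exprnP gez0_abs //.
  exact: eM.
by rewrite z_root mul0r.
Qed.

Section TrigPolyZeroSet.
Variable R : realType.
Local Notation unit_line := (unit_line R).
Local Notation uniform01 := (uniform01 R).

Lemma uniform01_setI01 (A : set unit_line) :
  uniform01 A = uniform01 (A `&` `[0%R, 1%R]).
Proof.
by rewrite /= /uniform_prob integral_uniform_pdf [RHS]integral_uniform_pdf -setIA setIid.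
Qed.

Lemma uniform01_trigpoly_zero_null (I : eqType) (s : seq I) (b : I -> R[i]) (e : I -> int)
    (e0 : int) :
  \sum_(j <- s | e j == e0) b j != 0 ->
  uniform01 [set t : unit_line | \sum_(j <- s) b j * expi (2 * pi * t) ^ e j = 0] = 0%E.
Proof.
move=> b_e0_neq0; set Z := [set t : unit_line | _].
have mZ : measurable Z.
  apply: measurable_cfun_eq0; apply: cmeasurable_sum => j.
  apply: cmeasurableM; first exact: cmeasurable_cst.
  by apply: cmeasurable_expiz; apply: measurable_funM => //; exact: measurable_cst.
have mZ01 : measurable (Z `&` `[0%R, 1%R]) by exact: measurableI.
rewrite uniform01_setI01; apply/(measure0_null_setP _ mZ01).1.
apply: dominates_uniform_prob; apply/measure0_null_setP => //.
apply: countable_lebesgue_measure0.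
have [r Zr] := laurent_roots b_e0_neq0.
have Z_in_r t : Z t -> expi (2 * pi * t) \in r by apply: Zr; exact: expi_neq0.
(* t is determined by expi (2 pi t) on [0, 1); the endpoint 1 gets its own code *)
apply/countable_injP.
exists (fun t : R => if t == 1 then 0%N else (index (expi (2 * pi * t)) r).+1).
move=> t1 t2 /set_mem [Z1] + /set_mem [Z2].
rewrite /= !in_itv /= => /andP[t1_ge0 t1_le1] /andP[t2_ge0 t2_le1].
case: eqP => [->|/eqP t1_neq1]; case: eqP => [->|/eqP t2_neq1] // [] same_index.
apply: expi_2pi_inj; rewrite ?t1_ge0 ?t2_ge0 ?lt_neqAle ?t1_neq1 ?t2_neq1 //.
by rewrite -(nth_index 0 (Z_in_r _ Z1)) same_index nth_index //; exact: Z_in_r.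
Qed.

End TrigPolyZeroSet.

Lemma product_null_of_sections d1 d2 (T1 : measurableType d1) (T2 : measurableType d2)
    (R : realType) (P : probability T1 R) (Q : probability T2 R)
    (N : set (T1 * T2)) (B : set T1) :
  measurable N -> measurable B -> P B = 0%E ->
  (forall y, ~ B y -> Q (xsection N y) = 0%E) -> (P \x Q)%E N = 0%E.
Proof.
move=> mN mB PB0 QN0; rewrite /= /product_measure1.
apply: le_anti; rewrite integral_ge0 // andbT.
apply: (@le_trans _ _ (\int[P]_y (\1_B y)%:E)%E); last first.
  by rewrite integral_indic // setIT; move/eqP: PB0; rewrite eq_le => /andP[].
apply: ge0_le_integral => //.
- exact: measurable_fun_xsection.
- exact/measurable_EFinP/measurable_indic.
move=> y _ /=; rewrite indicE; have [yB|yNB] := boolP (y \in B).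
  exact: probability_le1 (measurable_xsection _ mN).
by rewrite QN0 //; rewrite notin_setE in yNB.
Qed.

Section CubeTrigPoly.
Variable R : realType.
Local Notation unit_line := (unit_line R).

Definition cube_monomial n (k : nat -> int) (x : cube n) : R[i] :=
  \prod_(i < n) expi (2 * pi * angles n x i) ^ k i.
Arguments cube_monomial : clear implicits.

Definition cube_trigpoly (I : eqType) n (s : seq I) (a : I -> R[i])
    (k : I -> nat -> int) (x : cube n) : R[i] :=
  \sum_(j <- s) a j * cube_monomial n (k j) x.
Arguments cube_trigpoly {I} n s a k x.

Definition same_freq n (k1 k2 : nat -> int) := [forall i : 'I_n, k1 i == k2 i].

Lemma cmeasurable_cube_trigpoly (I : eqType) n s a (k : I -> nat -> int) :
  cmeasurable (cube_trigpoly n s a k).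
Proof.
apply: cmeasurable_sum => j; apply: cmeasurableM; first exact: cmeasurable_cst.
apply: cmeasurable_prod => i; apply: cmeasurable_expiz.
by apply: measurable_funM; [exact: measurable_cst | exact: measurable_angle].
Qed.

Lemma cube_monomialS n k (y : cube n) (t : unit_line) :
  cube_monomial n.+1 k ((y, t) : cube n.+1) =
  cube_monomial n k y * expi (2 * pi * t) ^ k n.
Proof.
rewrite /cube_monomial big_ord_recr (anglesS y t ord_max) (eqxx n).
rewrite (eq_bigr (fun i : 'I_n => expi (2 * pi * angles n y i) ^ k i)) => [//|i _].
by rewrite (anglesS y t i) ifN // neq_ltn ltn_ord.
Qed.

Lemma same_freqS n k1 k2 : same_freq n.+1 k1 k2 = same_freq n k1 k2 && (k1 n == k2 n).
Proof.
apply/forallP/andP => [h|[/forallP h1 h2] i].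
  by split; [apply/forallP => i; exact: h (widen_ord (leqnSn n) i) | exact: h ord_max].
have [lt_in|] := ltnP i n; first exact: h1 (Ordinal lt_in).
move=> ge_in; have -> : (i : nat) = n by apply/eqP; rewrite eqn_leq ge_in -ltnS ltn_ord.
exact: h2.
Qed.

Lemma xsection_cube_trigpoly_eq0 (I : eqType) n s a (k : I -> nat -> int) (y : cube n) :
  xsection [set x : cube n.+1 | cube_trigpoly n.+1 s a k x = 0] y =
  [set t : unit_line | \sum_(j <- s) (a j * cube_monomial n (k j) y) *
                         expi (2 * pi * t) ^ k j n = 0].
Proof.
have trigpolyS t : cube_trigpoly n.+1 s a k ((y, t) : cube n.+1) =
    \sum_(j <- s) (a j * cube_monomial n (k j) y) * expi (2 * pi * t) ^ k j n.
  by apply: eq_bigr => j _; rewrite cube_monomialS mulrA.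
by apply/seteqP; split => t; rewrite /xsection /= inE /mkset trigpolyS.
Qed.

Lemma cube_trigpoly_zero_null (I : eqType) n (s : seq I) a (k : I -> nat -> int) j0 :
  j0 \in s -> \sum_(j <- s | same_freq n (k j) (k j0)) a j != 0 ->
  cube_prob n [set x | cube_trigpoly n s a k x = 0] = 0%E.
Proof.
have measurable_zero_set n' s'' :
    measurable [set x : cube n' | cube_trigpoly n' s'' a k x = 0].
  by apply: measurable_cfun_eq0; exact: cmeasurable_cube_trigpoly.
elim: n s j0 => [|n IH] s j0 j0s a_neq0.
  have same_freq0 j : same_freq 0 (k j) (k j0) by apply/forallP => -[].
  rewrite (_ : [set x | _] = set0) ?measure0 //; apply/seteqP; split => x //=.
  rewrite /cube_trigpoly /cube_monomial; under eq_bigr do rewrite big_ord0 mulr1.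
  move=> sum_eq0; move: a_neq0; under eq_bigl => j do rewrite same_freq0.
  by rewrite sum_eq0 eqxx.
pose s' := [seq j <- s | k j n == k j0 n].
apply: (product_null_of_sections (B := [set y | cube_trigpoly n s' a k y = 0])).
- exact (measurable_zero_set n.+1 s).
- exact (measurable_zero_set n s').
- apply: (IH _ j0); first by rewrite mem_filter eqxx.
  rewrite big_filter_cond (eq_bigl (fun j => same_freq n.+1 (k j) (k j0))) //.
  by move=> j; rewrite same_freqS andbC.
move=> y y_nonzero; rewrite xsection_cube_trigpoly_eq0.
apply: (uniform01_trigpoly_zero_null (e0 := k j0 n)); apply/eqP => sum_eq0.
by apply: y_nonzero; rewrite /= /cube_trigpoly big_filter.
Qed.

End CubeTrigPoly.
Arguments cube_monomial {R} n k x.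
Arguments cube_trigpoly {R I} n s a k x.

Section SignPerturbation.
Context d (T : measurableType d) (R : realType) (P : probability T R).
Variable g : T -> R.
Hypothesis mg : measurable_fun setT g.

Lemma measurable_abs_le (eta : R) : measurable [set x | `|g x| <= eta].
Proof.
rewrite (_ : [set x | _] = (fun x => `|g x|) @^-1` `]-oo, eta]); last first.
  by apply/seteqP; split => x /=; rewrite in_itv.
rewrite -[X in measurable X]setTI.
by apply: (measurableT_comp (@normr_measurable R setT) mg) => //; exact: measurable_itv.
Qed.

Lemma prob_abs_le_small : P [set x | g x = 0] = 0%E ->
  forall e : R, 0 < e ->
  exists2 eta : R, 0 < eta & (P [set x | `|g x| <= eta]%R < e%:E)%E.
Proof.
move=> P_zero e e_gt0.
pose B n := [set x | `|g x| <= n.+1%:R^-1].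
have mB n : measurable (B n) by exact: measurable_abs_le.
have B_decr : {homo B : n k / (n <= k)%N >-> (k <= n)%O}.
  move=> n k le_nk; apply/subsetPset => x /= /le_trans; apply.
  by rewrite lef_pV2 ?posrE ?ltr0Sn // ler_nat ltnS.
have B_cap : \bigcap_n B n = [set x | g x = 0].
  apply/seteqP; split => x /=; last by move=> gx0 n _; rewrite /B /= gx0 normr0.
  move=> gx_small; apply/eqP; rewrite -normr_eq0; apply: contraT => gx_neq0.
  have /ltr_add_invr[n /[!add0r] n_lt] : 0 < `|g x| by rewrite lt_def gx_neq0 normr_ge0.
  by have := gx_small n I; rewrite /B /= leNgt n_lt.
have P_B_cvg : (P \o B) n @[n --> \oo] --> (0%:E : \bar R).
  have -> : (0%:E : \bar R) = P (\bigcap_n B n) by rewrite B_cap P_zero.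
  apply: nonincreasing_cvg_mu => //.
  - exact: le_lt_trans (probability_le1 _ (mB 0%N)) (ltry _).
  - exact: bigcapT_measurable.
move/fine_cvgP: P_B_cvg => [_ fine_P_B_cvg].
have [n _ n_small] := cvgr_lt _ fine_P_B_cvg _ e_gt0.
exists n.+1%:R^-1; first by rewrite invr_gt0 ltr0Sn.
by have := n_small n (leqnn n); rewrite /= -lte_fin fineK //; exact: fin_num_measure.
Qed.

Lemma prob_lt0_perturb (g' : T -> R) (eta : R) : measurable_fun setT g' ->
  (forall x, `|g' x - g x| < eta) ->
  (`|P [set x | g' x < 0]%R - P [set x | g x < 0]%R|
     <= P [set x | `|g x| <= eta]%R)%E.
Proof.
move=> mg' close.
have measurable_lt0 (f : T -> R) : measurable_fun setT f -> measurable [set x | f x < 0].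
  move=> mf; rewrite (_ : [set x | _] = f @^-1` `]-oo, 0[); last first.
    by apply/seteqP; split => x /=; rewrite in_itv.
  by rewrite -[X in measurable X]setTI; exact: mf.
set A := [set x | g x < 0]; set A' := [set x | g' x < 0].
set B := [set x | `|g x| <= eta].
have mA : measurable A by exact: measurable_lt0.
have mA' : measurable A' by exact: measurable_lt0.
have mB : measurable B by exact: measurable_abs_le.
(* a sign change between g and g' forces |g| < eta *)
have sub_A'A : A' `<=` A `|` B.
  move=> x; rewrite /A /A' /B /=; have := close x; rewrite ltr_norml.
  by case: (ltP (g x) 0) => gx; [left | right; rewrite ger0_norm //; lra].
have sub_AA' : A `<=` A' `|` B.
  move=> x; rewrite /A /A' /B /=; have := close x; rewrite ltr_norml.
  by case: (ltP (g' x) 0) => g'x; [left | right; rewrite ltr0_norm //; lra].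
have le_A'A : (P A' <= P A + P B)%E.
  apply: le_trans (measureU2 _ mA mB).
  by apply: le_measure => //; rewrite inE //; exact: measurableU.
have le_AA' : (P A <= P A' + P B)%E.
  apply: le_trans (measureU2 _ mA' mB).
  by apply: le_measure => //; rewrite inE //; exact: measurableU.
move: le_A'A le_AA'.
rewrite -(fineK (fin_num_measure P _ mA)) -(fineK (fin_num_measure P _ mA')).
rewrite -(fineK (fin_num_measure P _ mB)).
rewrite -EFinB abse_EFin -!EFinD !lee_fin => ? ?.
by rewrite ler_norml; apply/andP; split; lra.
Qed.

End SignPerturbation.

Section LaurentOnTorus.
Variables (R : realType) (m : nat) (D : {fset 'rV[int]_m}).
Implicit Types c : 'rV[int]_m -> R[i].

Definition laurent_cube c (x : cube m) : R[i] := laurent_eval D c (torus_pt (angles m x)).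

Definition torus_monomial (d : 'rV[int]_m) (x : cube m) : R[i] :=
  \prod_(k < m) torus_pt (angles m x) k ^ (d ord0 k).

Lemma laurent_cubeE c x : laurent_cube c x = \sum_(d <- D) c d * torus_monomial d x.
Proof. by []. Qed.

Lemma cmeasurable_laurent_cube c : cmeasurable (laurent_cube c).
Proof.
apply: cmeasurable_sum => d; apply: cmeasurableM; first exact: cmeasurable_cst.
apply: cmeasurable_prod => k; apply: cmeasurable_expiz.
by apply: measurable_funM; [exact: measurable_cst | exact: measurable_angle].
Qed.

Lemma conj_torus_monomial d x : ((torus_monomial d x)^*)%C = torus_monomial (- d) x.
Proof.
rewrite /torus_monomial rmorph_prod; apply: eq_bigr => k _.
by rewrite /torus_pt !expiXz mxE mulrNz mulNr -conj_expi.
Qed.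

Lemma norm_torus_monomial d x : `|torus_monomial d x| = 1.
Proof.
by rewrite /torus_monomial normr_prod big1 // => k _; rewrite /torus_pt expiXz norm_expi.
Qed.

Lemma Re_laurent_cube_dist c c' x delta :
  (forall d, d \in D -> `|c' d - c d| < delta%:C%C) ->
  `|complex.Re (laurent_cube c' x) - complex.Re (laurent_cube c x)| <= delta *+ size D.
Proof.
move=> close.
have -> : complex.Re (laurent_cube c' x) - complex.Re (laurent_cube c x) =
    complex.Re (laurent_cube c' x - laurent_cube c x).
  by case: (laurent_cube c' x) => ? ?; case: (laurent_cube c x).
rewrite -lecR; apply: le_trans (normc_ge_Re _) _; rewrite rmorphMn.
have -> : laurent_cube c' x - laurent_cube c x =
    \sum_(d <- D) (c' d - c d) * torus_monomial d x.
  by rewrite !laurent_cubeE -sumrB; apply: eq_bigr => d _; rewrite mulrBl.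
apply: le_trans (ler_norm_sum _ _ _) (le_trans _ (_ : \sum_(d <- D) delta%:C <= _)%C).
  rewrite big_seq [leRHS]big_seq; apply: ler_sum => d dD.
  by rewrite normrM norm_torus_monomial mulr1; exact: ltW (close d dD).
by rewrite big_const_seq count_predT iter_addr_0.
Qed.

Hypothesis D_sym : forall d, d \in D -> - d \in D.

Lemma big_fset_opp (f : 'rV[int]_m -> R[i]) :
  \sum_(d <- D) f (- d) = \sum_(d <- D) f d.
Proof.
rewrite -(big_map (fun d => - d) xpredT f); apply: perm_big; apply: uniq_perm.
- by rewrite map_inj_uniq ?fset_uniq //; exact: oppr_inj.
- exact: fset_uniq.
move=> d; rewrite -{1}(opprK d) (mem_map oppr_inj).
by apply/idP/idP => /D_sym //; rewrite opprK.
Qed.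

Lemma Im_laurent_cube c x : in_FD D c -> complex.Im (laurent_cube c x) = 0.
Proof.
move=> [c_herm _].
have : ((laurent_cube c x)^*)%C = laurent_cube c x.
  rewrite laurent_cubeE rmorph_sum -[RHS]big_fset_opp.
  rewrite big_seq [RHS]big_seq; apply: eq_bigr => d dD.
  by rewrite rmorphM c_herm // -conj_torus_monomial.
case: (laurent_cube c x) => a b /= [] /eqP.
by rewrite eq_sym -subr_eq0 opprK -mulr2n mulrn_eq0 /= => /eqP.
Qed.

Lemma rho_neg_cube c : in_FD D c ->
  rho_neg D c = cube_prob m [set x | complex.Re (laurent_cube c x) < 0].
Proof.
move=> cFD; rewrite /rho_neg torus_measure_cube; last first.
  exact: measurable_cfun_lt0 (cmeasurable_laurent_cube c).
congr (cube_prob m _); apply/seteqP; split => x /=;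
  by rewrite /laurent_cube ltcE /= (Im_laurent_cube x cFD) eqxx.
Qed.

(* Distinct [d] give distinct frequencies, and some [c d] is nonzero since [c] is
   normalized. *)
Lemma Re_laurent_cube_zero_null c : in_FD D c ->
  cube_prob m [set x | complex.Re (laurent_cube c x) = 0] = 0%E.
Proof.
move=> cFD; have [_ c_norm] := cFD.
pose freq (d : 'rV[int]_m) (j : nat) : int :=
  if insub j is Some k then d ord0 k else 0.
have freqE d (k : 'I_m) : freq d k = d ord0 k by rewrite /freq valK.
have laurent_trigpoly x : laurent_cube c x = cube_trigpoly m D c freq x.
  apply: eq_bigr => d _; congr (_ * _); apply: eq_bigr => k _.
  by rewrite /torus_pt freqE.
have -> : [set x | complex.Re (laurent_cube c x) = 0] =
    [set x | cube_trigpoly m D c freq x = 0].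
  apply/seteqP; split => x /=; rewrite -laurent_trigpoly; last by move->.
  by have := Im_laurent_cube x cFD; case: (laurent_cube c x) => a b /= -> ->.
have [d0 d0D c_d0] : exists2 d0, d0 \in D & c d0 != 0.
  have [//|no_d0] := pselect (exists2 d0, d0 \in D & c d0 != 0).
  suff : \sum_(d <- D) `|c d| ^+ 2 = 0 by rewrite c_norm => /eqP; rewrite oner_eq0.
  rewrite big_seq big1 // => d dD.
  have [->|nz] := eqVneq (c d) 0; first by rewrite normr0 expr0n.
  by case: no_d0; exists d.
apply: (cube_trigpoly_zero_null (j0 := d0)) => //.
rewrite (eq_bigl (fun d => d == d0)).
  by rewrite -big_filter filter_pred1_uniq ?fset_uniq // big_seq1.
move=> d /=; apply/forallP/eqP => [same|->] //; apply/rowP => k.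
by have /eqP := same k; rewrite !freqE.
Qed.

End LaurentOnTorus.

Unset Implicit Arguments.

Theorem lemma2 (R : realType) (m : nat) (D : {fset 'rV[int]_m})
  (hD0 : (0 : 'rV[int]_m) \notin D)
  (hDsym : forall d, d \in D -> - d \in D) :
  forall c : 'rV[int]_m -> R[i], in_FD D c ->
  forall e : R, 0 < e ->
  exists2 delta : R, 0 < delta &
    forall c' : 'rV[int]_m -> R[i], in_FD D c' ->
      (forall d, d \in D -> `|c' d - c d| < (delta%:C)%C) ->
      (`|rho_neg D c' - rho_neg D c| < e%:E)%E.
Proof.
move=> c cFD e e_gt0.
have mRe (c0 : 'rV[int]_m -> R[i]) :
    measurable_fun setT (fun x => complex.Re (laurent_cube D c0 x)).
  exact: (cmeasurable_laurent_cube D c0).1.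
have [eta eta_gt0 band_small] :=
  prob_abs_le_small (mRe c) (Re_laurent_cube_zero_null hDsym cFD) e_gt0.
exists (eta / (size D).+1%:R); first by rewrite divr_gt0 // ltr0Sn.
move=> c' c'FD close.
rewrite (rho_neg_cube hDsym cFD) (rho_neg_cube hDsym c'FD).
apply: le_lt_trans band_small; apply: prob_lt0_perturb => // x.
apply: le_lt_trans (Re_laurent_cube_dist x close) _.
by rewrite -[X in X < _]mulr_natr mulrAC ltr_pdivrMr ?ltr0Sn // ltr_pM2l // ltr_nat.
Qed.
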